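(* Let $G=(V,E)$ be a prime permutation graph, let $(<_1,<_2)$ be a realizer of $G$, and let $w$ be the first element of $<_1$. Then $\vartriangleleft_1^w=\,<_1$ and $\vartriangleleft_2^w=\,<_2$.
   Context: Graphs are finite, simple, undirected, with nonempty vertex set. A module of $G$ is a nonempty $M\subseteq V$ such that every vertex outside $M$ is adjacent to all or none of $M$; $G$ is prime if its only modules are $V$ and the singletons. A realizer of $G$ is a pair $(<_1,<_2)$ of strict linear orders on $V$ such that distinct $u,v$ are adjacent iff they appear in different orders in $<_1$ and $<_2$; $G$ is a permutation graph if it has a realizer. For a pair of binary relations $(\lhd_1,\lhd_2)$ on $V$: its transitive closure is $(\lhd_1^T,\lhd_2^T)$ (componentwise); its closure under $E$ is $(\lhd_1^E,\lhd_2^E)$ where, for $i\in[2]$, $\lhd_i^E=\lhd_i\cup\{(v,u)\mid u\lhd_{3-i}v,\ \{u,v\}\in E\}\cup\{(u,v)\mid u\lhd_{3-i}v,\ \{u,v\}\notin E\}$. For $w\in V$ define $\lhd_{1,0}^w=\{(w,v)\mid v\in V, v\ne w\}$, $\lhd_{2,0}^w=\emptyset$, and for $k\ge0$, $(\lhd_{1,k+1}^w,\lhd_{2,k+1}^w)=((\lhd_{1,k}^w,\lhd_{2,k}^w)^E)^T$. These increase with $k$; $\lhd_i^w$ denotes $\lhd_{i,m}^w$ for $m$ such that the sequence has stabilized. *)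

From mathcomp Require Import all_boot.
Set Implicit Arguments. Unset Strict Implicit. Unset Printing Implicit Defensive.

(* A finite simple graph on the finType T: symmetric irreflexive edge relation e.
   The vertex set V is [set: T] (nonemptiness follows from the existence of w). *)
Definition simple_graph (T : finType) (e : rel T) : Prop :=
  symmetric e /\ irreflexive e.

Definition is_module (T : finType) (e : rel T) (M : {set T}) : Prop :=
  M != set0 /\
  forall x, x \notin M -> (forall y, y \in M -> e x y) \/ (forall y, y \in M -> ~~ e x y).

Definition prime_graph (T : finType) (e : rel T) : Prop :=
  forall M : {set T}, is_module e M -> M = [set: T] \/ exists v, M = [set v].

Definition strict_linear_order (T : finType) (r : rel T) : Prop :=
  irreflexive r /\ transitive r /\ (forall u v, u != v -> r u v || r v u).

Definition realizer (T : finType) (e : rel T) (lt1 lt2 : rel T) : Prop :=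
  strict_linear_order lt1 /\ strict_linear_order lt2 /\
  forall u v, u != v ->
    (e u v <-> (lt1 u v && lt2 v u) || (lt1 v u && lt2 u v)).

Definition tclosure (T : finType) (r : rel T) : rel T :=
  fun u v => [exists x, r u x && connect r x v].

Definition tclosure2 (T : finType) (p : rel T * rel T) : rel T * rel T :=
  (tclosure p.1, tclosure p.2).

Definition Eclosure (T : finType) (e : rel T) (p : rel T * rel T) : rel T * rel T :=
  let l1 := p.1 in let l2 := p.2 in
  ((fun a b => [|| l1 a b, l2 b a && e a b | l2 a b && ~~ e a b]),
   (fun a b => [|| l2 a b, l1 b a && e a b | l1 a b && ~~ e a b])).

Definition lhd0 (T : finType) (w : T) : rel T * rel T :=
  ((fun a b => (a == w) && (b != w)), (fun _ _ => false)).

Fixpoint lhd_k (T : finType) (e : rel T) (w : T) (k : nat) : rel T * rel T :=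
  match k with
  | 0 => lhd0 w
  | k.+1 => tclosure2 (Eclosure e (lhd_k e w k))
  end.

Definition stabilized_at (T : finType) (e : rel T) (w : T) (m : nat) : Prop :=
  forall k, m <= k -> (lhd_k e w k).1 =2 (lhd_k e w m).1 /\
                      (lhd_k e w k).2 =2 (lhd_k e w m).2.

From mathcomp Require Import all_boot.
Set Implicit Arguments. Unset Strict Implicit. Unset Printing Implicit Defensive.

(* Every stage of the iteration lies below (<1, <2), since the realizer is
   transitive and closed under E; the stages grow inside a finite set, so they
   stabilize, and a stable pair (A, B) is itself transitive and closed under E.
   For such a pair, A-comparability and B-comparability coincide. If two
   vertices were A-incomparable, the component of one of them in the
   incomparability graph would be a module: a vertex outside it is comparable
   to all of it, so its adjacency cannot change along an incomparability edge.
   This module has two elements but misses w, which is A-below every vertex,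
   against primality. Hence A and B are total, and being contained in the
   strict orders <1 and <2 they are equal to them. *)

Definition subrel2 (T : Type) (p q : rel T * rel T) : Prop :=
  subrel p.1 q.1 /\ subrel p.2 q.2.

Definition eqrel2 (T : Type) (p q : rel T * rel T) : Prop :=
  p.1 =2 q.1 /\ p.2 =2 q.2.

Definition closed_pair (T : finType) (e : rel T) (p : rel T * rel T) : Prop :=
  [/\ transitive p.1, transitive p.2 & subrel2 (Eclosure e p) p].

Definition comparable (T : Type) (r : rel T) : rel T := fun u v => r u v || r v u.

Lemma comparableC (T : Type) (r : rel T) u v : comparable r u v = comparable r v u.
Proof. exact: orbC. Qed.

Section TransitiveClosure.
Variables (T : finType) (r : rel T).

Lemma tclosure_sub : subrel r (tclosure r).
Proof. by move=> u v ruv; apply/existsP; exists v; rewrite ruv connect0. Qed.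

Lemma tclosure_trans : transitive (tclosure r).
Proof.
move=> v u z /existsP[x /andP[rux cxv]] /existsP[y /andP[rvy cyz]].
apply/existsP; exists x; rewrite rux /=.
by apply: connect_trans cxv _; apply: connect_trans (connect1 rvy) cyz.
Qed.

Lemma tclosure_min (R : rel T) : subrel r R -> transitive R -> subrel (tclosure r) R.
Proof.
move=> rR trR u v /existsP[x /andP[rux /connectP[p xp ->]]].
elim: p x {rux}(rR _ _ rux) xp => //= y p IHp x Rux /andP[rxy yp].
exact: IHp (trR _ _ _ Rux (rR _ _ rxy)) yp.
Qed.

End TransitiveClosure.

Lemma subrel2_refl (T : Type) (p : rel T * rel T) : subrel2 p p.
Proof. by split. Qed.

Lemma subrel2_trans (T : Type) (p q s : rel T * rel T) :
  subrel2 p q -> subrel2 q s -> subrel2 p s.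
Proof. by move=> [pq1 pq2] [qs1 qs2]; split=> u v h; [apply/qs1/pq1 | apply/qs2/pq2]. Qed.

Section LhdIteration.
Variables (T : finType) (e : rel T).

Lemma Eclosure_mono (p q : rel T * rel T) :
  subrel2 p q -> subrel2 (Eclosure e p) (Eclosure e q).
Proof.
move=> [pq1 pq2]; split=> u v /=.
  by case/or3P=> [/pq1-> | /andP[/pq2-> ->] | /andP[/pq2-> ->]]; rewrite ?orbT.
by case/or3P=> [/pq2-> | /andP[/pq1-> ->] | /andP[/pq1-> ->]]; rewrite ?orbT.
Qed.

Lemma Eclosure_sub (p : rel T * rel T) : subrel2 p (Eclosure e p).
Proof. by split=> u v /= ->. Qed.

Lemma tclosure2_Eclosure_min (p q : rel T * rel T) :
  closed_pair e q -> subrel2 p q -> subrel2 (tclosure2 (Eclosure e p)) q.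
Proof.
move=> [tr1 tr2 [cl1 cl2]] /Eclosure_mono[pq1 pq2].
by split; apply: tclosure_min => // u v; [move/pq1/cl1 | move/pq2/cl2].
Qed.

Lemma lhd_k_mono (w : T) : {homo lhd_k e w : k j / k <= j >-> subrel2 k j}.
Proof.
apply: homo_leq => [p | q p s | k]; [exact: subrel2_refl | exact: subrel2_trans |].
have [sub1 sub2] := Eclosure_sub (lhd_k e w k).
by split=> u v h; apply: tclosure_sub; [apply: sub1 | apply: sub2].
Qed.

Lemma lhd_k_fixpoint_closed (w : T) m :
  eqrel2 (lhd_k e w m.+1) (lhd_k e w m) -> closed_pair e (lhd_k e w m).
Proof.
move=> [fix1 fix2]; split.
- by move=> y x z; rewrite -!fix1; apply: tclosure_trans.
- by move=> y x z; rewrite -!fix2; apply: tclosure_trans.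
- by split=> u v ?; [rewrite -fix1 | rewrite -fix2]; apply: tclosure_sub.
Qed.

End LhdIteration.

Lemma strict_linear_order_flip (T : finType) (r : rel T) u v :
  strict_linear_order r -> u != v -> r v u = ~~ r u v.
Proof.
move=> [irr [tr tot]] neq; apply/idP/idP => [rvu | /negPf ruv].
  by apply/negP => /(tr _ _ _ rvu); rewrite irr.
by move: (tot _ _ neq); rewrite ruv.
Qed.

Lemma total_subrel_eq (T : eqType) (r s : rel T) :
  subrel r s -> (forall u v, u != v -> comparable r u v) ->
  irreflexive s -> transitive s -> r =2 s.
Proof.
move=> rs tot irr tr u v; apply/idP/idP => [/rs // | suv].
have neq : u != v by apply: contraTneq suv => ->; rewrite irr.
case/orP: (tot _ _ neq) => // /rs svu.
by have := tr _ _ _ suv svu; rewrite irr.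
Qed.

Section Realizer.
Variables (T : finType) (e lt1 lt2 : rel T).
Hypothesis e_real : realizer e lt1 lt2.

Lemma realizer_edgeE u v : u != v -> e u v = (lt1 u v != lt2 u v).
Proof.
case: e_real => [slo1 [slo2 eE]] neq.
have -> : e u v = (lt1 u v && lt2 v u || lt1 v u && lt2 u v).
  by apply/idP/idP => /(eE _ _ neq).
rewrite (strict_linear_order_flip slo1 neq) (strict_linear_order_flip slo2 neq).
by case: (lt1 u v) (lt2 u v) => [] [].
Qed.

Lemma realizer_closed_pair : closed_pair e (lt1, lt2).
Proof.
case: e_real => [slo1 [slo2 _]]; have [[irr1 [tr1 _]] [irr2 [tr2 _]]] := (slo1, slo2).
split=> //; split=> u v /=; have [<- | neq] := eqVneq u v; rewrite ?irr1 ?irr2 //=.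
  rewrite realizer_edgeE // (strict_linear_order_flip slo2 neq).
  by case: (lt1 u v) (lt2 u v) => [] [].
rewrite realizer_edgeE // (strict_linear_order_flip slo1 neq).
by case: (lt1 u v) (lt2 u v) => [] [].
Qed.

Lemma lhd_k_sub_realizer w k :
  (forall v, v != w -> lt1 w v) -> subrel2 (lhd_k e w k) (lt1, lt2).
Proof.
move=> lt1w; elim: k => [|k IHk]; last exact: tclosure2_Eclosure_min realizer_closed_pair IHk.
by split=> u v //= /andP[/eqP-> /lt1w].
Qed.

End Realizer.

Section Comparability.
Variables (T : finType) (e : rel T) (p : rel T * rel T) (w : T).
Local Notation A := p.1.
Local Notation B := p.2.
Hypotheses (e_sym : symmetric e) (e_prime : prime_graph e).
Hypotheses (p_closed : closed_pair e p) (Aw : forall v, v != w -> A w v).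

Lemma A_orient x y : A x y -> if e x y then B y x else B x y.
Proof.
case: p_closed => _ _ [_ /= clB] Axy.
by case exy: (e x y); apply: clB; rewrite /= Axy ?(e_sym y x) exy ?orbT.
Qed.

Lemma B_orient x y : B x y -> if e x y then A y x else A x y.
Proof.
case: p_closed => _ _ [/= clA _] Bxy.
by case exy: (e x y); apply: clA; rewrite /= Bxy ?(e_sym y x) exy ?orbT.
Qed.

Lemma comparableAB x y : comparable A x y = comparable B x y.
Proof.
apply/idP/idP => /orP[] /[dup] h; rewrite /comparable.
- by move/A_orient; case: (e x y) => ->; rewrite ?orbT.
- by move/A_orient; case: (e y x) => ->; rewrite ?orbT.
- by move/B_orient; case: (e x y) => ->; rewrite ?orbT.
- by move/B_orient; case: (e y x) => ->; rewrite ?orbT.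
Qed.

(* If [a] and [c] lie on the same side of [b], their different adjacencies to
   [b] put them on opposite sides of [b] in [B], and [B] is transitive. *)
Lemma comparable_switch a b c :
  comparable A a b -> comparable A b c -> e b a != e b c -> comparable A a c.
Proof.
have [trA trB _] : [/\ transitive A, transitive B & _] := p_closed.
case/orP=> [Aab | Aba] /orP[Abc | Acb] e_switch.
- by rewrite /comparable (trA _ _ _ Aab Abc).
- rewrite comparableAB /comparable.
  move: (A_orient Aab) (A_orient Acb); rewrite (e_sym a b) (e_sym c b).
  case: (e b a) (e b c) e_switch => [] [] //= _ Bb Bb'.
    by rewrite (trB _ _ _ Bb' Bb) orbT.
  by rewrite (trB _ _ _ Bb Bb').
- rewrite comparableAB /comparable.
  move: (A_orient Aba) (A_orient Abc).
  case: (e b a) (e b c) e_switch => [] [] //= _ Bb Bb'.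
    by rewrite (trB _ _ _ Bb Bb').
  by rewrite (trB _ _ _ Bb' Bb) orbT.
- by rewrite /comparable (trA _ _ _ Acb Aba) orbT.
Qed.

Definition incomparable u v := (u != v) && ~~ comparable A u v.

Definition incomparable_component x := [set z | connect incomparable x z].

Lemma incomparable_sym : symmetric incomparable.
Proof. by move=> u v; rewrite /incomparable eq_sym comparableC. Qed.

Lemma incomparable_w u : ~~ incomparable u w.
Proof.
by rewrite /incomparable /comparable; case: eqVneq => //= /Aw ->; rewrite orbT.
Qed.

Lemma w_notin_component x : x != w -> w \notin incomparable_component x.
Proof.
have w_closed : closed incomparable (predC1 w).
  apply: (intro_closed (sym_connect_sym incomparable_sym)) => u v uv _.
  by rewrite !inE; apply: contraNneq (incomparable_w u) => <-.
move=> xw; rewrite inE; apply/negP => /(closed_connect w_closed).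
by rewrite !inE xw eqxx.
Qed.

Lemma incomparable_component_closed x :
  closed incomparable (incomparable_component x).
Proof.
move=> u v uv; rewrite !inE.
exact: connect_closed (sym_connect_sym incomparable_sym) x u v uv.
Qed.

Lemma comparable_outside_component x z u :
  z \notin incomparable_component x -> u \in incomparable_component x ->
  comparable A u z.
Proof.
move=> zC uC; apply/contraR: (zC) => incomp.
have uz : u != z by apply: contraNneq zC => <-.
have uz_incomp : incomparable u z by rewrite /incomparable uz.
by rewrite -(incomparable_component_closed x uz_incomp).
Qed.

(* An incomparability edge [v v'] inside the component cannot switch the
   adjacency of an outside vertex [z], by [comparable_switch] at [z]. *)
Lemma adjacency_const_on_component x z u :
  z \notin incomparable_component x -> u \in incomparable_component x ->
  e z u = e z x.
Proof.
set C := incomparable_component x => zC.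
have C_closed := incomparable_component_closed x.
pose a := [pred v | (v \in C) ==> (e z v == e z x)].
have a_closed : closed incomparable a.
  apply: (intro_closed (sym_connect_sym incomparable_sym)) => v v' vv'.
  move=> /implyP ezv; apply/implyP => v'C.
  have vC : v \in C by rewrite (C_closed v v' vv').
  rewrite -(eqP (ezv vC)); apply: contraTT vv' => e_switch.
  rewrite /incomparable negb_and !negbK; apply/orP; right.
  apply: comparable_switch (comparable_outside_component zC vC) _ _.
    by rewrite comparableC (comparable_outside_component zC v'C).
  by rewrite eq_sym.
move=> uC; have xu : connect incomparable x u by rewrite inE in uC.
have : u \in a by rewrite -(closed_connect a_closed xu) inE eqxx implybT.
by move=> /implyP/(_ uC)/eqP.
Qed.

Lemma incomparable_component_module x : is_module e (incomparable_component x).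
Proof.
split; first by apply/set0Pn; exists x; rewrite inE connect0.
move=> z zC; case exz: (e z x); [left | right] => u uC;
  by rewrite (adjacency_const_on_component zC uC) exz.
Qed.

Lemma comparable_total x y : x != y -> comparable A x y.
Proof.
move=> xy; apply: contraT => incomp.
have xw : x != w.
  by apply: contraNneq incomp => xw; rewrite xw /comparable Aw // -xw eq_sym.
have xC : x \in incomparable_component x by rewrite inE connect0.
have yC : y \in incomparable_component x by rewrite inE connect1 // /incomparable xy.
case: (e_prime (incomparable_component_module x)) => [CT | [v Cv]].
  by move: (w_notin_component xw); rewrite CT inE.
by move: xC yC xy; rewrite Cv !inE => /eqP-> /eqP->; rewrite eqxx.
Qed.

Lemma comparableB_total x y : x != y -> comparable B x y.
Proof. by rewrite -comparableAB; apply: comparable_total. Qed.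

End Comparability.

Lemma lhd_k_fixpoint_eq (T : finType) (e lt1 lt2 : rel T) (w : T) m :
  simple_graph e -> prime_graph e -> realizer e lt1 lt2 ->
  (forall v, v != w -> lt1 w v) ->
  eqrel2 (lhd_k e w m.+1) (lhd_k e w m) -> eqrel2 (lhd_k e w m) (lt1, lt2).
Proof.
move=> [e_sym _] e_prime e_real lt1w /lhd_k_fixpoint_closed m_closed.
have [sub1 sub2] := lhd_k_sub_realizer e_real m lt1w.
have Aw v : v != w -> (lhd_k e w m).1 w v.
  by move=> vw; apply: (lhd_k_mono e w (leq0n m)).1; rewrite /= eqxx vw.
case: e_real => [[irr1 [tr1 _]] [[irr2 [tr2 _]] _]].
split; apply: total_subrel_eq => //.
  exact: comparable_total e_sym e_prime m_closed Aw.
exact: comparableB_total e_sym e_prime m_closed Aw.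
Qed.

Lemma nondecreasing_bounded_stalls (f : nat -> nat) N :
  (forall k, f k <= f k.+1) -> (forall k, f k <= N) -> exists k, f k.+1 = f k.
Proof.
move=> f_mono f_bnd.
have : (exists k, f k.+1 = f k) \/ N.+1 <= f N.+1.
  elim: N.+1 => [|n [stall | n_le]]; [by right | by left |].
  have [eq_f | neq_f] := eqVneq (f n.+1) (f n); first by left; exists n.
  by right; apply: leq_ltn_trans n_le _; rewrite ltn_neqAle eq_sym neq_f f_mono.
by case=> // /leq_trans/(_ (f_bnd _)); rewrite ltnn.
Qed.

Lemma set_chain_stalls (T : finType) (S : nat -> {set T}) :
  (forall k, S k \subset S k.+1) -> exists k, S k.+1 = S k.
Proof.
move=> S_mono; have [k card_eq] : exists k, #|S k.+1| = #|S k|.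
  by apply: (nondecreasing_bounded_stalls (N := #|T|)) => k;
    [exact: subset_leq_card | exact: max_card].
by exists k; apply/esym/eqP; rewrite eqEcard S_mono card_eq leqnn.
Qed.

Definition rel2_set (T : finType) (p : rel T * rel T) : {set bool * (T * T)} :=
  [set x | (if x.1 then p.1 else p.2) x.2.1 x.2.2].

Lemma rel2_set_subset (T : finType) (p q : rel T * rel T) :
  subrel2 p q -> rel2_set p \subset rel2_set q.
Proof.
by move=> [pq1 pq2]; apply/subsetP => -[[] [u v]]; rewrite !inE; [apply: pq1 | apply: pq2].
Qed.

Lemma rel2_set_inj (T : finType) (p q : rel T * rel T) :
  rel2_set p = rel2_set q -> eqrel2 p q.
Proof.
move=> /setP pq; split=> u v.
  by move: (pq (true, (u, v))); rewrite !inE.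
by move: (pq (false, (u, v))); rewrite !inE.
Qed.

Lemma lhd_k_stalls (T : finType) (e : rel T) (w : T) :
  exists m, eqrel2 (lhd_k e w m.+1) (lhd_k e w m).
Proof.
have [m stall] := set_chain_stalls (fun k => rel2_set_subset (lhd_k_mono e w (leqnSn k))).
by exists m; apply: rel2_set_inj.
Qed.

Theorem corollary5p7 (T : finType) (e : rel T) (lt1 lt2 : rel T) (w : T) :
  simple_graph e -> prime_graph e -> realizer e lt1 lt2 ->
  (forall v, v != w -> lt1 w v) ->
  (exists m, stabilized_at e w m) /\
  (forall m, stabilized_at e w m ->
     (lhd_k e w m).1 =2 lt1 /\ (lhd_k e w m).2 =2 lt2).
Proof.
move=> e_simple e_prime e_real lt1w.
have fixpoint_eq m := lhd_k_fixpoint_eq (m := m) e_simple e_prime e_real lt1w.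
split=> [|m stable]; last exact/fixpoint_eq/(stable m.+1).
have [m /fixpoint_eq[eq1 eq2]] := lhd_k_stalls e w.
exists m => k le_mk.
have [mk1 mk2] := lhd_k_mono e w le_mk.
have [sub1 sub2] := lhd_k_sub_realizer e_real k lt1w.
split=> u v; apply/idP/idP.
- by move/sub1; rewrite eq1.
- exact: mk1.
- by move/sub2; rewrite eq2.
- exact: mk2.
Qed.
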